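(* Let $\mathcal S$ be an aperiodic primitive qubit spin substitution in $\mathbb Z^m$ given by $(Q,\mathcal D,G,W)$. There is a unitary matrix $V$, independent of $\vec k$, such that for all $\vec k\in\mathbb R^m$ $$V^{*}B(\vec k)V=\bigoplus_{\chi\in\widehat G}B_\chi(\vec k).$$ Moreover, if $\mathcal S$ is $\chi$-unitary, then $B_\chi(\vec k)=\sqrt{|\det Q|}\,U(\vec k)$ with $U(\vec k)$ unitary, and consequently the Lyapunov exponent of the cocycle generated by $B_\chi$ satisfies $\lambda^{B_\chi}(\vec k)=\log\sqrt{|\det Q|}$ for all $\vec k\in\mathbb R^m$.
   Context: $Q$ is an expansive endomorphism of $\mathbb Z^m$ and $\mathcal D$ a complete set of coset representatives of $\mathbb Z^m/Q\mathbb Z^m$ (so $|\mathcal D|=|\det Q|$). Spin substitution: finite abelian group $G$, $W:\mathcal D\times\mathcal D\to G$, alphabet $\mathcal A=G\times\mathcal D$ with letters $g\mathsf d$, $\mathcal S(g\mathsf d,\vec d')=(gW(\vec d,\vec d'))\mathsf d'$; primitive = substitution matrix has a positive power; aperiodic = no configuration of the (nonempty) generated subshift has a nonzero period. Fourier matrix: the $\mathcal A\times\mathcal A$ matrix $B(\vec k)_{\mathsf a\mathsf b}=\sum_{\vec x\in T_{\mathsf a\mathsf b}}e^{2\pi i\langle\vec k,\vec x\rangle}$ with $T_{\mathsf a\mathsf b}=\{\vec x\in\mathcal D:\mathcal S(\mathsf b,\vec x)=\mathsf a\}$. For $\chi\in\widehat G$, $B_\chi(\vec k)$ is the $\mathcal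 D\times\mathcal D$ matrix with entries $B_\chi(\vec k)_{\vec d,\vec d'}=e^{2\pi i\langle\vec k,\vec d\rangle}\chi(W(\vec d',\vec d))$. For a matrix function $A$, the cocycle is $A^{(n)}(\vec k)=A(\vec k)A(Q^T\vec k)\cdots A((Q^T)^{n-1}\vec k)$ and the (maximal) Lyapunov exponent is $\lambda^A(\vec k)=\limsup_{n\to\infty}\frac1n\log\|A^{(n)}(\vec k)\|$. $\mathcal S$ is $\chi$-unitary if $\frac{1}{\sqrt{|\mathcal D|}}(\chi(W(\vec d,\vec d')))$ is unitary. *)

From HB Require Import structures.
From mathcomp Require Import all_boot all_order all_algebra all_fingroup.
From mathcomp Require Import all_classical all_reals all_analysis.
From mathcomp Require Import complex.
Set Implicit Arguments. Unset Strict Implicit. Unset Printing Implicit Defensive.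
Import Order.TTheory GRing.Theory Num.Theory.
Local Open Scope ring_scope.

Section FinMat.
Variable R : realType.
Local Notation C := (R[i]).

Definition cconj (z : C) : C := let: Complex a b := z in Complex a (- b).
Definition cnorm (z : C) : R := let: Complex a b := z in Num.sqrt (a ^+ 2 + b ^+ 2).

Definition fmul (I J K : finType) (A : I -> J -> C) (B : J -> K -> C) : I -> K -> C :=
  fun i k => \sum_(j : J) A i j * B j k.
Definition fadj (I J : finType) (A : I -> J -> C) : J -> I -> C :=
  fun j i => cconj (A i j).
Definition fid (I : finType) : I -> I -> C := fun i j => if i == j then 1 else 0.
Definition fscale (I J : finType) (c : C) (A : I -> J -> C) : I -> J -> C :=
  fun i j => c * A i j.

Definition funitary (I J : finType) (V : I -> J -> C) : Prop :=
  (forall j j', fmul (fadj V) V j j' = fid j j') /\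
  (forall i i', fmul V (fadj V) i i' = fid i i').

Definition fdirect_sum (X D : finType) (Bs : X -> D -> D -> C) :
  (X * D)%type -> (X * D)%type -> C :=
  fun p q => if p.1 == q.1 then Bs p.1 p.2 q.2 else 0.

Definition vnorm (I : finType) (v : I -> C) : R :=
  Num.sqrt (\sum_(i : I) cnorm (v i) ^+ 2).
Definition opnorm (I : finType) (A : I -> I -> C) : R :=
  sup [set r : R | exists v : I -> C,
         vnorm v = 1 /\ r = vnorm (fun i => \sum_(j : I) A i j * v j)].
End FinMat.

Definition zvec (m : nat) := 'cV[int]_m.

Definition pairing (R : realType) (m : nat) (k : 'cV[R]_m) (x : zvec m) : R :=
  \sum_(i < m) k i 0 * (x i 0)%:~R.

Definition expi2pi (R : realType) (t : R) : R[i] :=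
  Complex (cos (2 * pi * t)) (sin (2 * pi * t)).

Definition QTact (R : realType) (m : nat) (Q : 'M[int]_m) (k : 'cV[R]_m) : 'cV[R]_m :=
  (map_mx (fun z : int => z%:~R) Q)^T *m k.

Definition expansive (R : realType) (m : nat) (Q : 'M[int]_m) : Prop :=
  forall z : R[i], root (char_poly (map_mx (fun x : int => x%:~R) Q)) z ->
    1 < cnorm z.

(* dv : D -> Z^m enumerates a complete set of coset representatives of
   Z^m / Q Z^m (each coset contains exactly one dv d) *)
Definition complete_residues (m : nat) (Q : 'M[int]_m) (D : finType)
  (dv : D -> zvec m) : Prop :=
  (forall x : zvec m, exists d : D, exists y : zvec m, x = dv d + Q *m y) /\
  (forall (d d' : D) (y y' : zvec m), dv d + Q *m y = dv d' + Q *m y' -> d = d').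

(* Spin substitutions. Alphabet A = G * D ; letter (g, d) is "g d".     *)
Section Spin.
Variables (gT : finGroupType) (D : finType) (W : D -> D -> gT).

Definition spin_letter := (gT * D)%type.

Definition spin_sub (a : spin_letter) (d' : D) : spin_letter :=
  ((a.1 * W a.2 d')%g, d').

Definition sub_matrix (a b : spin_letter) : nat := #|[set x : D | spin_sub b x == a]|.

Fixpoint nat_mpow (n : nat) : spin_letter -> spin_letter -> nat :=
  match n with
  | 0 => fun a b => (a == b : nat)
  | n'.+1 => fun a c => (\sum_(b : spin_letter) sub_matrix a b * nat_mpow n' b c)%N
  end.

Definition primitive_sub : Prop :=
  exists n, (0 < n)%N /\ forall a b, (0 < nat_mpow n a b)%N.

Variables (m : nat) (Q : 'M[int]_m) (dv : D -> zvec m).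

(* occurs n a x b : the n-th iterate S^n(a) (a patch placed with a at the
   origin for n = 0) carries the letter b at position x *)
Inductive occurs : nat -> spin_letter -> zvec m -> spin_letter -> Prop :=
  | occurs0 a : occurs 0 a 0 a
  | occursS n a y b d : occurs n a y b ->
      occurs n.+1 a (Q *m y + dv d) (spin_sub b d).

(* the subshift generated by S: configurations all of whose finite
   patches are (translates of) subpatches of some S^n(a) *)
Definition in_subshift (w : zvec m -> spin_letter) : Prop :=
  forall F : seq (zvec m), exists n a, exists t : zvec m,
    forall x, x \in F -> occurs n a (x + t) (w x).

Definition aperiodic_sub : Prop :=
  forall w, in_subshift w ->
    forall p : zvec m, p != 0 -> ~ (forall x, w (x + p) = w x).

Definition fourier_matrix (R : realType) (k : 'cV[R]_m) :
  spin_letter -> spin_letter -> R[i] :=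
  fun a b => \sum_(x : D | spin_sub b x == a) expi2pi (pairing k (dv x)).

Definition is_character (R : realType) (chi : gT -> R[i]) : Prop :=
  chi 1%g = 1 /\ forall g h, chi (g * h)%g = chi g * chi h.

Definition B_chi (R : realType) (chi : gT -> R[i]) (k : 'cV[R]_m) : D -> D -> R[i] :=
  fun d d' => expi2pi (pairing k (dv d)) * chi (W d' d).

Definition chi_unitary (R : realType) (chi : gT -> R[i]) : Prop :=
  funitary (fun d d' : D => ((Num.sqrt (#|D|%:R : R))^-1)%:C%C * chi (W d d')).
End Spin.

Fixpoint cocycle (R : realType) (m : nat) (Q : 'M[int]_m) (D : finType)
  (A : 'cV[R]_m -> D -> D -> R[i]) (n : nat) (k : 'cV[R]_m) : D -> D -> R[i] :=
  match n with
  | 0 => @fid R D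
  | n'.+1 => fmul (A k) (cocycle Q A n' (QTact Q k))
  end.

Definition lyapunov (R : realType) (m : nat) (Q : 'M[int]_m) (D : finType)
  (A : 'cV[R]_m -> D -> D -> R[i]) (k : 'cV[R]_m) : \bar R :=
  limn_esup (fun n : nat => ((n%:R)^-1 * ln (opnorm (cocycle Q A n k)))%:E).

From HB Require Import structures.
From mathcomp Require Import all_boot all_order all_algebra all_fingroup.
From mathcomp Require Import all_classical all_reals all_analysis.
From mathcomp Require Import complex ring.
Set Implicit Arguments. Unset Strict Implicit. Unset Printing Implicit Defensive.
Import Order.TTheory GRing.Theory Num.Theory.
Local Open Scope ring_scope.

(* For G = {1, s} the trivial and the sign character are real and satisfy both
   orthogonality relations, so the normalised character table T(g, chi) is
   unitary, and so is V = T (x) 1 on G x D.  The (g e, h e') entry of B(k) is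
   e^{2 pi i <k, e>} [g = h W(e', e)]; after conjugation by V, multiplicativity of
   the characters and row orthogonality collapse the double sum over g, h to
   e^{2 pi i <k, e>} chi(W(e', e)) [chi = chi'], the block B_chi(k).
   If (chi(W(d, d')))/sqrt|D| is unitary, B_chi(k)/sqrt|D| is a unimodular
   diagonal matrix times its transpose, hence unitary, and |D| = |det Q| by the
   Smith normal form of Q.  A product of n unitaries scaled by sqrt|D| has
   operator norm exactly |D|^(n/2), so (1/n) log ||B_chi^(n)(k)|| is constantly
   log sqrt|det Q| for n >= 1. *)

Section FiniteMatrices.
Variable R : realType.
Local Notation C := R[i].

Lemma cconjE (z : C) : cconj z = z^*%C. Proof. by case: z. Qed.

Lemma cconjM (x y : C) : cconj (x * y) = cconj x * cconj y.
Proof. by rewrite !cconjE rmorphM. Qed.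

Lemma cconj_sum (I : finType) (F : I -> C) : cconj (\sum_i F i) = \sum_i cconj (F i).
Proof. by rewrite cconjE rmorph_sum; apply: eq_bigr => i _; rewrite cconjE. Qed.

Lemma cconjK : involutive (@cconj R).
Proof. by move=> z; rewrite !cconjE conjcK. Qed.

Lemma cconj_real (x : R) : cconj x%:C%C = x%:C%C.
Proof. by rewrite cconjE conjc_real. Qed.

Lemma fid_sym (I : finType) (i j : I) : fid R i j = fid R j i.
Proof. by rewrite /fid eq_sym. Qed.

Lemma cconj_fid (I : finType) (i j : I) : cconj (fid R i j) = fid R i j.
Proof. by rewrite /fid; case: eqP; rewrite ?(cconj_real 1) ?(cconj_real 0). Qed.

Lemma sum_fidl (I : finType) (i : I) (F : I -> C) : \sum_j fid R i j * F j = F i.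
Proof.
rewrite (bigD1 i) //= /fid eqxx mul1r big1 ?addr0 // => j.
by rewrite eq_sym => /negbTE ->; rewrite mul0r.
Qed.

Lemma sum_fidr (I : finType) (j : I) (F : I -> C) : \sum_i F i * fid R i j = F j.
Proof. by under eq_bigr do rewrite mulrC fid_sym; apply: sum_fidl. Qed.

Lemma fmul1 (I J : finType) (A : I -> J -> C) : fmul A (@fid R _) = A.
Proof. by apply: funext => i; apply: funext => j; apply: sum_fidr. Qed.

Lemma fmul1l (I J : finType) (A : I -> J -> C) : fmul (@fid R _) A = A.
Proof. by apply: funext => i; apply: funext => j; apply: sum_fidl. Qed.

Lemma fmulA (I J K L : finType) (A : I -> J -> C) (B : J -> K -> C) (M : K -> L -> C) :
  fmul (fmul A B) M = fmul A (fmul B M).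
Proof.
apply: funext => i; apply: funext => l; rewrite /fmul.
under eq_bigr => k _ do rewrite big_distrl /=.
rewrite exchange_big; apply: eq_bigr => j _; rewrite big_distrr /=.
by apply: eq_bigr => k _; rewrite mulrA.
Qed.

Lemma fadj_mul (I J K : finType) (A : I -> J -> C) (B : J -> K -> C) :
  fadj (fmul A B) = fmul (fadj B) (fadj A).
Proof.
apply: funext => k; apply: funext => i; rewrite /fmul /fadj cconj_sum.
by apply: eq_bigr => j _; rewrite cconjM mulrC.
Qed.

Lemma fmul_scale (I J K : finType) (a b : C) (A : I -> J -> C) (B : J -> K -> C) :
  fmul (fscale a A) (fscale b B) = fscale (a * b) (fmul A B).
Proof.
apply: funext => i; apply: funext => k; rewrite /fmul /fscale big_distrr /=.
by apply: eq_bigr => j _; ring.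
Qed.

Lemma funitaryP (I J : finType) (V : I -> J -> C) :
  funitary V <-> fmul (fadj V) V = (@fid R _) /\ fmul V (fadj V) = (@fid R _).
Proof.
split=> [[VV1 VV2]|[VV1 VV2]]; last by split=> i j; rewrite ?VV1 ?VV2.
by split; apply: funext => i; apply: funext => j; [apply: VV1 | apply: VV2].
Qed.

Lemma funitary_fid (I : finType) : funitary (@fid R I).
Proof.
have adj1 : fadj (@fid R I) = (@fid R _).
  by apply: funext => i; apply: funext => j; rewrite /fadj cconj_fid fid_sym.
by apply/funitaryP; rewrite adj1 fmul1.
Qed.

Lemma funitary_mul (I : finType) (A B : I -> I -> C) :
  funitary A -> funitary B -> funitary (fmul A B).
Proof.
move=> /funitaryP[AA1 AA2] /funitaryP[BB1 BB2]; apply/funitaryP.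
rewrite fadj_mul; split.
  by rewrite fmulA -(fmulA (fadj A)) AA1 fmul1l.
by rewrite fmulA -(fmulA B) BB2 fmul1l.
Qed.

Lemma funitary_tr (I : finType) (A : I -> I -> C) :
  funitary A -> funitary (fun i j => A j i).
Proof.
move=> [AA1 AA2]; split=> i j; rewrite -cconj_fid.
  rewrite -AA2 /fmul /fadj cconj_sum; apply: eq_bigr => l _.
  by rewrite cconjM cconjK.
rewrite -AA1 /fmul /fadj cconj_sum; apply: eq_bigr => l _.
by rewrite cconjM cconjK mulrC.
Qed.

Lemma funitary_phase (I : finType) (u : I -> C) (A : I -> I -> C) :
  (forall i, cconj (u i) * u i = 1) -> funitary A -> funitary (fun i j => u i * A i j).
Proof.
move=> uu1 [AA1 AA2]; split=> i j.
  rewrite -AA1 /fmul /fadj; apply: eq_bigr => l _.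
  by rewrite cconjM mulrACA uu1 mul1r.
rewrite /fmul /fadj.
under eq_bigr do rewrite cconjM mulrACA.
rewrite -big_distrr /= [X in _ * X]AA2 /fid; case: eqP => [->|_]; last by rewrite mulr0.
by rewrite mulr1 mulrC uu1.
Qed.
End FiniteMatrices.

Section Tensor.
Variable R : realType.
Local Notation C := R[i].

Lemma sum_pair (I J : finType) (F : I * J -> C) :
  \sum_p F p = \sum_i \sum_j F (i, j).
Proof. by rewrite (pair_bigA _ (fun i j => F (i, j))); apply: eq_bigr => -[]. Qed.

Definition ftensor (I J K L : finType) (A : I -> J -> C) (B : K -> L -> C) :
  I * K -> J * L -> C := fun p q => A p.1 q.1 * B p.2 q.2.

Lemma fmul_tensor (I J K L M N : finType) (A : I -> J -> C) (A' : J -> K -> C)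
    (B : L -> M -> C) (B' : M -> N -> C) :
  fmul (ftensor A B) (ftensor A' B') = ftensor (fmul A A') (fmul B B').
Proof.
apply: funext => p; apply: funext => q; rewrite /fmul /ftensor sum_pair big_distrlr.
by apply: eq_bigr => j _; apply: eq_bigr => l _ /=; rewrite mulrACA.
Qed.

Lemma fadj_tensor (I J K L : finType) (A : I -> J -> C) (B : K -> L -> C) :
  fadj (ftensor A B) = ftensor (fadj A) (fadj B).
Proof. by apply: funext => p; apply: funext => q; rewrite /fadj /ftensor cconjM. Qed.

Lemma ftensor_fid (I K : finType) : ftensor (@fid R I) (@fid R K) = (@fid R _).
Proof.
apply: funext => -[i k]; apply: funext => -[j l].
by rewrite /ftensor /fid xpair_eqE /=; case: eqP; case: eqP; rewrite ?mulr1 ?mulr0.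
Qed.

Lemma funitary_tensor (I J K L : finType) (A : I -> J -> C) (B : K -> L -> C) :
  funitary A -> funitary B -> funitary (ftensor A B).
Proof.
move=> /funitaryP[AA1 AA2] /funitaryP[BB1 BB2]; apply/funitaryP.
by rewrite fadj_tensor !fmul_tensor AA1 AA2 BB1 BB2 !ftensor_fid.
Qed.

Lemma conj_tensor_fid (I J K : finType) (U : I -> J -> C) (B : I * K -> I * K -> C) x e y e' :
  fmul (fmul (fadj (ftensor U (@fid R _))) B) (ftensor U (@fid R _)) (x, e) (y, e') =
  fmul (fmul (fadj U) (fun g h => B (g, e) (h, e'))) U x y.
Proof.
rewrite /fmul /fadj /ftensor sum_pair; apply: eq_bigr => h _ /=.
under eq_bigr => d' _ do rewrite sum_pair mulrA.
rewrite sum_fidr; congr (_ * _); apply: eq_bigr => g _.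
by under eq_bigr do rewrite cconjM cconj_fid mulrAC; rewrite sum_fidr.
Qed.
End Tensor.

Section CharacterTable.
Variable R : realType.
Local Notation C := R[i].
Variables (gT : finGroupType) (X : finType) (chis : X -> gT -> C).
Hypothesis chis_char : forall x, is_character (chis x).
Hypothesis chis_orth :
  forall x y, \sum_g chis x g * cconj (chis y g) = #|gT|%:R * fid R x y.
Hypothesis chis_complete :
  forall g h, \sum_x cconj (chis x g) * chis x h = #|gT|%:R * fid R g h.

Let c : C := ((Num.sqrt (#|gT|%:R : R))^-1)%:C%C.

Lemma char_scale_sqr : c * c * #|gT|%:R = 1.
Proof.
rewrite -rmorphM -invfM -expr2 sqr_sqrtr ?ler0n // fmorphV rmorph_nat mulVf //.
by rewrite pnatr_eq0 -lt0n; apply/card_gt0P; exists 1%g.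
Qed.

Definition char_table (g : gT) (x : X) : C := c * cconj (chis x g).

Lemma char_table_unitary : funitary char_table.
Proof.
split=> [x y|g h]; rewrite /fmul /fadj /char_table.
  under eq_bigr do rewrite cconjM cconjK cconj_real mulrACA.
  by rewrite -big_distrr /= chis_orth mulrA char_scale_sqr mul1r.
under eq_bigr do rewrite cconjM cconjK cconj_real mulrACA.
by rewrite -big_distrr /= chis_complete mulrA char_scale_sqr mul1r.
Qed.

Lemma char_table_translation (w : gT) (a : C) x y :
  fmul (fmul (fadj char_table) (fun g h => fid R g (h * w)%g * a)) char_table x y =
  a * chis x w * fid R x y.
Proof.
rewrite /fmul /fadj /char_table.
under eq_bigr => h _ do rewrite (eq_bigr _ (fun g _ => mulrA _ _ a)) -big_distrl /= sum_fidr.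
rewrite (eq_bigr (fun h => a * chis x w * (c * c) * (chis x h * cconj (chis y h)))).
  rewrite -big_distrr chis_orth /=.
  by rewrite -[RHS]mulr1 -[X in _ = _ * X]char_scale_sqr; ring.
by move=> h _; rewrite cconjM cconjK cconj_real (chis_char x).2; ring.
Qed.

Variables (D : finType) (W : D -> D -> gT) (m : nat) (dv : D -> zvec m).

Lemma fourier_matrixE (k : 'cV[R]_m) g e h d' :
  fourier_matrix W dv k (g, e) (h, d') = fid R g (h * W d' e)%g * expi2pi (pairing k (dv e)).
Proof.
rewrite /fourier_matrix (eq_bigl (fun x => (x == e) && (g == h * W d' e)%g)); last first.
  by move=> x; rewrite /spin_sub xpair_eqE eq_sym andbC; case: eqP => // ->.
by rewrite big_mkcondr big_pred1_eq /fid; case: ifP; rewrite ?mul1r ?mul0r.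
Qed.

Definition char_basis : spin_letter gT D -> X * D -> C := ftensor char_table (@fid R _).

Lemma char_basis_unitary : funitary char_basis.
Proof. exact: funitary_tensor char_table_unitary (funitary_fid _ _). Qed.

Lemma char_basis_block_diag k p q :
  fmul (fmul (fadj char_basis) (fourier_matrix W dv k)) char_basis p q =
  fdirect_sum (fun x => B_chi W dv (chis x) k) p q.
Proof.
case: p q => [x e] [y e']; rewrite conj_tensor_fid.
have -> : (fun g h => fourier_matrix W dv k (g, e) (h, e')) =
    (fun g h => fid R g (h * W e' e)%g * expi2pi (pairing k (dv e))).
  by apply: funext => g; apply: funext => h; apply: fourier_matrixE.
rewrite char_table_translation /fdirect_sum /B_chi /fid /=.
by case: eqP; rewrite ?mulr1 ?mulr0.
Qed.
End CharacterTable.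

Lemma card2_generator (gT : finGroupType) :
  #|gT| = 2%N -> exists s : gT, s != 1%g /\ forall g, g = 1%g \/ g = s.
Proof.
move=> card2; have /cards1P[s set_s] : #|[set~ (1%g : gT)]| == 1%N.
  by rewrite cardsC1 card2.
have s_neq1 : s != 1%g by have := set11 s; rewrite -set_s !inE.
exists s; split=> // g; case: (eqVneq g 1%g) => [|g_neq1]; first by left.
by right; apply/set1P; rewrite -set_s !inE.
Qed.

Section GroupOfOrderTwo.
Variable R : realType.
Local Notation C := R[i].
Variables (gT : finGroupType) (s : gT).
Hypotheses (s_neq1 : s != 1%g) (gT_1s : forall g, g = 1%g \/ g = s).

Lemma mulss : (s * s = 1)%g.
Proof.
case: (gT_1s (s * s)%g) => // /(canRL (mulKg s)); rewrite mulVg => s1.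
by move: s_neq1; rewrite s1 eqxx.
Qed.

Lemma sum_order2 (F : gT -> C) : \sum_g F g = F 1%g + F s.
Proof.
rewrite (bigD1 1%g) // (bigD1 s) //= big1 ?addr0 ?addrA // => g /andP[g1 gs].
by case: (gT_1s g) => g_eq; rewrite g_eq eqxx ?andbF in g1 gs.
Qed.

Lemma card_order2 : #|gT| = 2%N.
Proof.
rewrite -cardsT (_ : [set: gT] = [set 1%g; s]).
  by rewrite cards2 eq_sym (negPf s_neq1).
by apply/setP => g; rewrite !inE; case: (gT_1s g) => ->; rewrite eqxx ?orbT.
Qed.

Definition sign_char (b : bool) (g : gT) : C := if b && (g != 1%g) then -1 else 1.

Lemma sign_char_is_character b : is_character (sign_char b).
Proof.
split; first by rewrite /sign_char eqxx andbF.
move=> g h; case: (gT_1s g) => ->; case: (gT_1s h) => ->;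
  rewrite ?mul1g ?mulg1 ?mulss /sign_char ?eqxx ?andbF ?mul1r ?mulr1 //.
by case: b => //=; rewrite ?mulr1 // s_neq1 mulrNN mulr1.
Qed.

Lemma cconj_sign_char b g : cconj (sign_char b g) = sign_char b g.
Proof. by rewrite /sign_char; case: ifP; rewrite cconjE ?rmorphN rmorph1. Qed.

Lemma sign_char_orth x y :
  \sum_g sign_char x g * cconj (sign_char y g) = #|gT|%:R * fid R x y.
Proof.
rewrite sum_order2 card_order2 !cconj_sign_char /sign_char /fid eqxx !andbF s_neq1.
by case: x; case: y => /=; ring.
Qed.

Lemma sign_char_complete g h :
  \sum_x cconj (sign_char x g) * sign_char x h = #|gT|%:R * fid R g h.
Proof.
rewrite big_bool card_order2 !cconj_sign_char /sign_char /fid /=.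
case: (gT_1s g) => ->; case: (gT_1s h) => ->;
  rewrite ?eqxx ?s_neq1 ?(negPf s_neq1) ?(eq_sym 1%g) ?(negPf s_neq1) /=; ring.
Qed.

Lemma sign_char_inj : injective sign_char.
Proof.
move=> b b' /(congr1 (fun chi => chi s)); rewrite /sign_char s_neq1 !andbT.
have N1_neq1 : (-1 : C) != 1 by rewrite eq_sym -subr_eq0 opprK -(natrD C 1 1) pnatr_eq0.
by case: b; case: b' => // /eqP; rewrite ?(negbTE N1_neq1) // eq_sym (negbTE N1_neq1).
Qed.

Lemma sign_char_surj (chi : gT -> C) : is_character chi -> exists b, sign_char b = chi.
Proof.
case=> chi1 chiM; have : chi s ^+ 2 == 1 by rewrite expr2 -chiM mulss chi1.
rewrite sqrf_eq1 => /orP[] /eqP chi_s; [exists false | exists true];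
  by apply: funext => g; rewrite /sign_char /=; case: (gT_1s g) => ->; rewrite ?eqxx ?s_neq1.
Qed.
End GroupOfOrderTwo.

Lemma absz_unit (x : int) : x \is a GRing.unit -> `|x|%N = 1%N.
Proof. by rewrite unfold_in /= => /orP[] /eqP ->. Qed.

Lemma absz_det_unitmx n (L : 'M[int]_n) : L \in unitmx -> `|\det L|%N = 1%N.
Proof. by rewrite unitmxE; apply: absz_unit. Qed.

Section Residues.
Variables (m : nat) (D : finType).

Lemma complete_residues_unimodular (L S M : 'M[int]_m) (dv : D -> zvec m) :
  L \in unitmx -> M \in unitmx -> complete_residues (L *m S *m M) dv ->
  complete_residues S (fun e => invmx L *m dv e).
Proof.
move=> uL uM [ex uq]; split.
  move=> x; have [e [y ex_y]] := ex (L *m x); exists e, (M *m y).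
  by rewrite -(mulKmx uL x) ex_y mulmxDr !mulmxA mulVmx // mul1mx.
move=> e e' y y' eq_ee'; apply: (uq e e' (invmx M *m y) (invmx M *m y')).
have /(congr1 (mulmx L)) := eq_ee'.
by rewrite !mulmxDr !mulKVmx // -!mulmxA !(mulmxA M) !mulmxV // !mul1mx !mulmxA.
Qed.

Variables (d : 'I_m -> int) (w : D -> zvec m).
Hypothesis resw : complete_residues (diag_mx (\row_i d i)) w.

Lemma diag_residueE (x y : zvec m) i :
  (x + diag_mx (\row_i d i) *m y) i 0 = x i 0 + d i * y i 0.
Proof. by rewrite mul_diag_mx !mxE. Qed.

Lemma diag_residues_neq0 i : d i != 0.
Proof.
apply/negP => /eqP di0.
(* The vectors n e_i, n <= #|D|, then lie in pairwise distinct residue classes. *)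
pose u (n : 'I_#|D|.+1) : zvec m := \col_j (if j == i then n%:Z else 0).
have [f f_res] := choice (fun n => resw.1 (u n)).
have f_coord (n : 'I_#|D|.+1) : n%:Z = w (f n) i 0.
  have [y /(congr1 (fun x : zvec m => x i 0))] := f_res n.
  by rewrite diag_residueE di0 mul0r addr0 mxE eqxx.
have f_inj : injective f.
  by move=> n n' eq_f; apply/val_inj/eqP; rewrite -eqz_nat f_coord eq_f -f_coord.
by have := leq_card _ f_inj; rewrite card_ord ltnn.
Qed.

Lemma absz_modz_lt (x : int) {y : int} : y != 0 -> (`|(x %% y)%Z| < `|y|)%N.
Proof. by move=> y0; rewrite -ltz_nat gez0_abs ?modz_ge0 // ltz_mod. Qed.

Definition residue_box := {dffun forall i : 'I_m, 'I_`|d i|}.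

Definition residue_index (e : D) : residue_box :=
  [ffun i => Ordinal (absz_modz_lt (w e i 0) (diag_residues_neq0 i))].

Lemma residue_index_inj : injective residue_index.
Proof.
move=> e e' /ffunP eq_idx.
have eq_mod i : modz (w e i 0) (d i) = modz (w e' i 0) (d i).
  have /(congr1 val) /= /eqP := eq_idx i; rewrite !ffunE /= -eqz_nat.
  by rewrite !gez0_abs ?modz_ge0 ?diag_residues_neq0 // => /eqP.
pose z : zvec m := \col_i (divz (w e i 0) (d i) - divz (w e' i 0) (d i)).
apply: (resw.2 e e' 0 z); apply/matrixP => i j; rewrite (ord1 j).
rewrite !diag_residueE mxE mulr0 addr0 {1}(divz_eq (w e i 0) (d i)).
by rewrite {1}(divz_eq (w e' i 0) (d i)) eq_mod mxE; ring.
Qed.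

Lemma residue_index_surj (r : residue_box) : exists e, r = residue_index e.
Proof.
have [e [y ry]] := resw.1 (\col_i (r i : nat)%:Z); exists e.
apply/ffunP => i; apply/val_inj/eqP; rewrite ffunE /= -eqz_nat.
have /(congr1 (fun x : zvec m => x i 0)) := ry; rewrite diag_residueE mxE => r_i.
rewrite gez0_abs ?modz_ge0 ?diag_residues_neq0 // -(modzMDl (y i 0)).
by rewrite [y i 0 * _]mulrC addrC -r_i -modz_abs modz_small // ltz_nat /=.
Qed.

Lemma card_residue_box : #|residue_box| = (\prod_i `|d i|)%N.
Proof.
rewrite card_dep_ffun foldrE big_map big_enum /=.
by apply: eq_bigr => i _; rewrite card_ord.
Qed.

Lemma card_diag_residues : #|D| = (\prod_i `|d i|)%N.
Proof.
rewrite -card_residue_box -(card_codom residue_index_inj).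
apply/eqP; rewrite eqn_leq max_card /=.
apply/subset_leq_card/fintype.subsetP => r _; apply/codomP; exact: residue_index_surj.
Qed.

End Residues.

Lemma card_residues m (Q : 'M[int]_m) (D : finType) (dv : D -> zvec m) :
  complete_residues Q dv -> #|D| = `|\det Q|%N.
Proof.
case: (int_Smith_normal_form Q) => L uL [M uM [d _ ->]].
have -> : \matrix_(i, j) (d`_i *+ (i == j :> nat)) = diag_mx (\row_i d`_i) :> 'M[int]_m.
  by apply/matrixP => i j; rewrite !mxE.
move=> resQ.
rewrite (card_diag_residues (complete_residues_unimodular uL uM resQ)).
rewrite !det_mulmx !abszM (absz_det_unitmx uL) (absz_det_unitmx uM) mul1n muln1.
by rewrite det_diag (big_morph _ abszM (erefl : `|1|%N = 1%N)); apply: eq_bigr => i _; rewrite mxE.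
Qed.

Section Norms.
Variable R : realType.
Local Notation C := R[i].

Lemma cnorm_ge0 (z : C) : 0 <= cnorm z.
Proof. by case: z => a b; apply: sqrtr_ge0. Qed.

Lemma cnormM (x y : C) : cnorm (x * y) = cnorm x * cnorm y.
Proof.
case: x y => [a b] [c d] /=; rewrite -sqrtrM ?addr_ge0 ?sqr_ge0 //.
by congr Num.sqrt; ring.
Qed.

Lemma cnorm_real (r : R) : 0 <= r -> cnorm r%:C%C = r.
Proof. by move=> r0; rewrite /cnorm /= expr0n /= addr0 sqrtr_sqr ger0_norm. Qed.

Lemma cnorm_sqrC (z : C) : ((cnorm z ^+ 2)%:C)%C = z * cconj z.
Proof.
case: z => a b; rewrite /cnorm /= sqr_sqrtr ?addr_ge0 ?sqr_ge0 //.
by apply/eqP; rewrite eq_complex /=; apply/andP; split; apply/eqP; ring.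
Qed.

Lemma vnorm_sqrC (I : finType) (v : I -> C) :
  ((vnorm v ^+ 2)%:C)%C = \sum_i v i * cconj (v i).
Proof.
rewrite /vnorm sqr_sqrtr ?sumr_ge0 // ?rmorph_sum => [|i _]; last exact: sqr_ge0.
by apply: eq_bigr => i _; apply: cnorm_sqrC.
Qed.

Lemma vnorm_scale (I : finType) (a : C) (v : I -> C) :
  vnorm (fun i => a * v i) = cnorm a * vnorm v.
Proof.
rewrite /vnorm; under eq_bigr do rewrite cnormM exprMn.
rewrite -big_distrr sqrtrM ?sqr_ge0 // sqrtr_sqr ger0_norm //; exact: cnorm_ge0.
Qed.

Lemma vnorm_unitary (I : finType) (U : I -> I -> C) (v : I -> C) : funitary U ->
  vnorm (fun i => \sum_j U i j * v j) = vnorm v.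
Proof.
move=> [UU1 _]; apply/eqP; rewrite -(eqrXn2 (n := 2)) ?sqrtr_ge0 //.
apply/eqP/(@complexI R); rewrite !vnorm_sqrC.
transitivity (\sum_j \sum_j' v j * cconj (v j') * fmul (fadj U) U j' j).
  under eq_bigr do rewrite cconj_sum big_distrl /=.
  under eq_bigr do under eq_bigr do rewrite big_distrr /=.
  rewrite exchange_big; apply: eq_bigr => j _.
  rewrite exchange_big; apply: eq_bigr => j' _.
  rewrite /fmul /fadj big_distrr /=; apply: eq_bigr => i _; rewrite cconjM; ring.
by apply: eq_bigr => j _; under eq_bigr do rewrite UU1; rewrite sum_fidr.
Qed.
End Norms.

Section ScaledUnitary.
Local Open Scope classical_set_scope.
Variable R : realType.
Local Notation C := R[i].

Lemma vnorm_fid (I : finType) (i0 : I) : vnorm (@fid R I i0) = 1.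
Proof.
apply/eqP; rewrite -(eqrXn2 (n := 2)) ?sqrtr_ge0 // expr1n.
apply/eqP/(@complexI R); rewrite vnorm_sqrC (bigD1 i0) //= big1 => [|i].
  by rewrite /fid eqxx (cconj_real 1) mulr1 addr0.
by rewrite /fid eq_sym => /negbTE ->; rewrite mul0r.
Qed.

Lemma opnorm_scale_unitary (I : finType) (i0 : I) (r : R) (U : I -> I -> C) :
  0 <= r -> funitary U -> opnorm (fscale r%:C%C U) = r.
Proof.
move=> r0 U_unitary.
have image_r (v : I -> C) : vnorm v = 1 ->
    vnorm (fun i => \sum_j fscale r%:C%C U i j * v j) = r.
  move=> v1; rewrite (_ : (fun i => _) = (fun i => r%:C%C * \sum_j U i j * v j)).
    by rewrite vnorm_scale vnorm_unitary // v1 mulr1 cnorm_real.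
  apply: funext => i; rewrite big_distrr /=; apply: eq_bigr => j _; by rewrite mulrA.
rewrite /opnorm (_ : [set _ | _] = [set r]) ?sup1 //.
apply/seteqP; split=> [x [v [v1 ->]]|x ->] /=; first exact: image_r.
by exists (fid R i0); rewrite vnorm_fid image_r ?vnorm_fid.
Qed.

Variables (m : nat) (Q : 'M[int]_m) (D : finType) (A : 'cV[R]_m -> D -> D -> C) (r : R).
Hypothesis A_scaled : forall k, exists2 U, funitary U & A k = fscale r%:C%C U.

Lemma cocycle_scale_unitary n k :
  exists2 U, funitary U & cocycle Q A n k = fscale (r ^+ n)%:C%C U.
Proof.
elim: n k => [|n IHn] k /=.
  exists (@fid R D); first exact: funitary_fid.
  by apply: funext => i; apply: funext => j; rewrite /fscale expr0 mul1r.
have [U U_unitary ->] := A_scaled k; have [V V_unitary ->] := IHn (QTact Q k).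
exists (fmul U V); first exact: funitary_mul.
by rewrite fmul_scale -rmorphM -exprS.
Qed.

Lemma lyapunov_scale_unitary (d0 : D) k : 0 < r -> lyapunov Q A k = (ln r)%:E.
Proof.
move=> r_gt0; apply: (cvg_limn_einf_sup _).2; apply: cvg_near_cst; near=> n.
have [U U_unitary ->] := cocycle_scale_unitary n k.
rewrite (opnorm_scale_unitary d0) ?exprn_ge0 ?ltW // lnXn // -[ln r *+ n]mulr_natr mulrCA.
by rewrite mulVf ?mulr1 // pnatr_eq0 -lt0n; near: n; exists 1%N.
Unshelve. all: by end_near.
Qed.
End ScaledUnitary.

Section ChiUnitary.
Variable R : realType.
Variables (gT : finGroupType) (D : finType) (W : D -> D -> gT) (m : nat) (dv : D -> zvec m).

Lemma cconj_expi2pi_mul (t : R) : cconj (expi2pi t) * expi2pi t = 1.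
Proof. by rewrite mulrC -cnorm_sqrC /cnorm /expi2pi /= cos2Dsin2 sqrtr1 expr1n. Qed.

Lemma B_chi_scale_unitary (chi : gT -> R[i]) k : (0 < #|D|)%N -> chi_unitary W chi ->
  exists2 U, funitary U & B_chi W dv chi k = fscale (Num.sqrt (#|D|%:R : R))%:C%C U.
Proof.
move=> D_gt0 chi_unitary; set c := Num.sqrt (#|D|%:R : R).
have c_neq0 : c != 0 by rewrite sqrtr_eq0 -ltNge ltr0n.
exists (fun d d' => expi2pi (pairing k (dv d)) * (c^-1%:C * chi (W d' d)))%C.
  exact: funitary_phase (fun d => cconj_expi2pi_mul _) (funitary_tr chi_unitary).
apply: funext => d; apply: funext => d'.
by rewrite /fscale /B_chi mulrCA; congr (_ * _); rewrite mulrA -rmorphM mulfV // rmorph1 mul1r.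
Qed.
End ChiUnitary.

Theorem proposition4p16 (R : realType) (m : nat) (Q : 'M[int]_m)
  (D : finType) (dv : D -> 'cV[int]_m) (gT : finGroupType) (W : D -> D -> gT) :
  (0 < m)%N ->
  expansive R Q ->
  complete_residues Q dv ->
  #|gT| = 2%N ->                       (* qubit: G has two elements *)
  primitive_sub W ->
  aperiodic_sub W Q dv ->
  (exists (X : finType) (chis : X -> gT -> R[i]),
     (forall x, is_character (chis x)) /\
     injective chis /\
     (forall chi : gT -> R[i], is_character chi -> exists x, chis x = chi) /\
     exists V : spin_letter gT D -> (X * D)%type -> R[i],
       funitary V /\
       forall (k : 'cV[R]_m) (p q : (X * D)%type),
         fmul (fmul (fadj V) (fourier_matrix W dv k)) V p q =
         fdirect_sum (fun x => B_chi W dv (chis x) k) p q)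
  /\
  (forall chi : gT -> R[i], is_character chi -> chi_unitary W chi ->
     (forall k : 'cV[R]_m, exists U : D -> D -> R[i],
        funitary U /\
        B_chi W dv chi k = fscale ((Num.sqrt (`|\det Q|%:~R : R))%:C)%C U) /\
     (forall k : 'cV[R]_m,
        lyapunov Q (B_chi W dv chi) k = (ln (Num.sqrt (`|\det Q|%:~R : R)))%:E)).
Proof.
move=> _ _ residues card2 _ _.
have [s [s_neq1 gT_1s]] := card2_generator card2.
split.
  have char := @sign_char_is_character R _ _ s_neq1 gT_1s.
  have orth := sign_char_orth R s_neq1 gT_1s.
  have complete := sign_char_complete R s_neq1 gT_1s.
  exists bool, (sign_char R (gT:=gT)); split=> //.
  split; first exact: sign_char_inj s_neq1.
  split; first exact: sign_char_surj s_neq1 gT_1s.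
  exists (@char_basis R gT bool (@sign_char R gT) D); split; first exact: char_basis_unitary.
  by move=> k p q; apply: (char_basis_block_diag char orth).
move=> chi _ chi_unitary.
have [d0 _] := residues.1 0.
have D_gt0 : (0 < #|D|)%N by apply/card_gt0P; exists d0.
have B_scaled k := B_chi_scale_unitary dv k D_gt0 chi_unitary.
rewrite -abszE -(card_residues residues); split=> k.
  by have [U U_unitary B_eq] := B_scaled k; exists U.
by apply: lyapunov_scale_unitary d0 k _; rewrite ?sqrtr_gt0 ?ltr0n.
Qed.
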